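(* Let $m\ge 2$, $\widetilde m\ge 1$, and let $\ell_1=\lfloor (m+\widetilde m)/2\rfloor$, $\ell_2=\lceil (m+\widetilde m)/2\rceil$. Let $\mathcal{T}^1=(t^1_i)_{i\in\mathbb{Z}}$ be strictly increasing and let $\mathcal{T}^0=(t^0_i)_{i\in\mathbb{Z}}$ with $t^0_i=t^1_{2i}$. Set $V_0=S_{m,\mathcal{T}^0}$, $V_1=S_{m,\mathcal{T}^1}$. For each $k$ let $$\Xi_k=\big(t^0_{k+1-\ell_1},t^0_{k+2-\ell_1},\dots,t^0_k,\;t^1_{2k+1},\;t^0_{k+1},\dots,t^0_{k+\ell_2}\big)$$ (a strictly increasing sequence of $m+\widetilde m+1$ knots), let $N^{\Xi_k}_{m+\widetilde m}$ be the B-spline of order $m+\widetilde m$ with knots $\Xi_k$, and define the wavelet $\psi_k=\alpha_k\,\frac{d^{\widetilde m}}{dt^{\widetilde m}}N^{\Xi_k}_{m+\widetilde m}$ with a constant $\alpha_k\neq 0$. Then: (1) For each $k$ there are $\sigma_k\in V_0$ and $\gamma_k\in\mathbb{R}$, $\gamma_k\ne 0$, such that $\psi_k(t)=\sigma_k(t)+\gamma_k\,(t-t^1_{2k+1})_+^{m-1}$ for all $t\in\mathbb{R}$. (2) Let $s_1\in V_1$ be compactly supported and suppose $s_1=s_0+\sum_k d_k\psi_k$ (finite sum) with $s_0\in V_0$ and $d_k\in\mathbb{R}$. Write $s_1(t)=\sum_{i\in\mathbb{Z}}a_i\,(t-t^1_i)_+^{m-1}$ (truncated power representation). Then for every $k$,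 $$d_k=\frac{a_{2k+1}}{\gamma_k},$$ where $a_{2k+1}$ equals $\frac{1}{(m-1)!}$ times the jump of $s_1^{(m-1)}$ at $t^1_{2k+1}$ and $\gamma_k$ equals $\frac{1}{(m-1)!}$ times the jump of $\psi_k^{(m-1)}$ at $t^1_{2k+1}$.
   Context: For a strictly increasing knot sequence $\mathcal{T}=(t_i)_{i\in\mathbb{Z}}$ and an integer $m\ge 2$, the spline space of order $m$ is $S_{m,\mathcal{T}}=\{f\in C^{m-2}(\mathbb{R}): f|_{(t_i,t_{i+1}]}\text{ is a polynomial of degree}<m \text{ for all } i\}$. For a finite strictly increasing knot sequence $\xi_0<\xi_1<\dots<\xi_{r}$, the B-spline of order $r$ with these knots is the (up to normalization unique) nonzero piecewise polynomial of degree $<r$ with breakpoints $\xi_i$, in $C^{r-2}(\mathbb{R})$, supported on $[\xi_0,\xi_r]$ (normalized, e.g., so that B-splines form a partition of unity; the normalization is absorbed in $\alpha_k$). The truncated power is $(t)_+^{j}=\chi_{(0,\infty)}(t)\,t^j$. The jump of a piecewise constant function $g$ at $\tau$ means $g(\tau+)-g(\tau-)$. *)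

From Stdlib Require Import Reals ZArith Lia Lra.
Open Scope R_scope.

Fixpoint sumR (n : nat) (f : nat -> R) : R :=
  match n with
  | O => 0
  | S n' => sumR n' f + f n'
  end.

(* sumZ lo hi f = sum of f k for lo <= k <= hi (empty if hi < lo) *)
Definition sumZ (lo hi : Z) (f : Z -> R) : R :=
  sumR (Z.to_nat (hi - lo + 1)) (fun j => f (lo + Z.of_nat j)%Z).

Definition tpow (j : nat) (x : R) : R :=
  if Rlt_dec 0 x then x ^ j else 0.

Definition deriv_chain (n : nat) (D : nat -> R -> R) : Prop :=
  forall j, (j < n)%nat -> forall x, derivable_pt_lim (D j) x (D (S j) x).

Definition nth_deriv (n : nat) (f g : R -> R) : Prop :=
  exists D : nat -> R -> R,
    (forall x, D O x = f x) /\ deriv_chain n D /\ (forall x, D n x = g x).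

Definition Ck (k : nat) (f : R -> R) : Prop :=
  exists D : nat -> R -> R,
    (forall x, D O x = f x) /\ deriv_chain k D /\ continuity (D k).

Definition poly_on (m : nat) (a b : R) (f : R -> R) : Prop :=
  exists c : nat -> R, forall x, a < x <= b -> f x = sumR m (fun j => c j * x ^ j).

Definition strictly_increasing (t : Z -> R) : Prop :=
  forall i, t i < t (i + 1)%Z.

Definition spline (m : nat) (t : Z -> R) (f : R -> R) : Prop :=
  Ck (m - 2) f /\ forall i : Z, poly_on m (t i) (t (i + 1)%Z) f.

(* N is a (nonzero, arbitrarily normalized) B-spline of order r with the
   strictly increasing knots xi 0 < xi 1 < ... < xi r *)
Definition is_Bspline (r : nat) (xi : nat -> R) (N : R -> R) : Prop :=
  (exists x, N x <> 0) /\
  (forall j, (j < r)%nat -> poly_on r (xi j) (xi (S j)) N) /\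
  Ck (r - 2) N /\
  (forall x, x < xi O \/ xi r < x -> N x = 0).

Definition Xi (m mt : nat) (t1 : Z -> R) (k : Z) (j : nat) : R :=
  let l1 := ((m + mt) / 2)%nat in
  if (j <? l1)%nat then t1 (2 * (k + 1 - Z.of_nat l1 + Z.of_nat j))%Z
  else if (j =? l1)%nat then t1 (2 * k + 1)%Z
  else t1 (2 * (k + Z.of_nat j - Z.of_nat l1))%Z.

(* A compactly supported C^(p-1) function that is a polynomial of degree at most p between
   consecutive knots y_0 < ... < y_n is a combination of the truncated powers (x - y_i)_+^p,
   the coefficient at y_i measuring the jump of the p-th derivative there.  For the B-spline
   on Xi_k every coefficient is nonzero: without one of them only r of the powers
   (x - y_i)^(r-1) are left to the right of the support, where the B-spline vanishes, and these
   are linearly independent.  Differentiating mt times turns psi_k into a combination of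
   truncated powers of order m at the knots of Xi_k, all of which are knots of T^0 except the
   middle one t^1_(2k+1); this splits psi_k into sigma_k in V_0 plus
   gamma_k (t - t^1_(2k+1))_+^(m-1) with gamma_k <> 0.  For (2), on (t^1_(2k), t^1_(2k+2)]
   every term of the two expansions of s_1 is a polynomial except the multiples of
   (t - t^1_(2k+1))_+^(m-1), which forces a_(2k+1) = d_k gamma_k. *)

From Stdlib Require Import Reals ZArith.
From Stdlib Require Import Lia Lra ClassicalEpsilon.
Open Scope R_scope.

Lemma sumR_ext n f g : (forall j, (j < n)%nat -> f j = g j) -> sumR n f = sumR n g.
Proof.
  induction n as [|n IH]; intros H; simpl; [reflexivity|].
  rewrite IH by (intros; apply H; lia). rewrite H by lia. reflexivity.
Qed.

Lemma sumR_lin n a b f g :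
  sumR n (fun j => a * f j + b * g j) = a * sumR n f + b * sumR n g.
Proof. induction n as [|n IH]; simpl; [ring|]. rewrite IH. ring. Qed.

Lemma sumR_scal n a f : sumR n (fun j => a * f j) = a * sumR n f.
Proof. induction n as [|n IH]; simpl; [ring|]. rewrite IH. ring. Qed.

Lemma sumR_zero n f : (forall j, (j < n)%nat -> f j = 0) -> sumR n f = 0.
Proof.
  induction n as [|n IH]; intros H; simpl; [reflexivity|].
  rewrite IH by (intros; apply H; lia). rewrite H by lia. ring.
Qed.

Lemma sumR_succ_l n f : sumR (S n) f = f O + sumR n (fun j => f (S j)).
Proof. induction n as [|n IH]; simpl in *; [ring|]. rewrite IH. ring. Qed.

Definition skip (l i : nat) : nat := if (i <? l)%nat then i else S i.

Lemma skip_neq l i : skip l i <> l.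
Proof. unfold skip. destruct (Nat.ltb_spec i l); lia. Qed.

Lemma skip_lt l i j : (i < j)%nat -> (skip l i < skip l j)%nat.
Proof. unfold skip. destruct (Nat.ltb_spec i l), (Nat.ltb_spec j l); lia. Qed.

Lemma skip_le l i : (skip l i <= S i)%nat.
Proof. unfold skip. destruct (Nat.ltb_spec i l); lia. Qed.

Lemma sumR_remove r l g : (l <= r)%nat ->
  sumR (S r) g = sumR r (fun i => g (skip l i)) + g l.
Proof.
  unfold skip. induction r as [|r IH]; intros Hl.
  - replace l with O by lia. simpl. ring.
  - change (sumR (S (S r)) g) with (sumR (S r) g + g (S r)).
    destruct (Nat.eq_dec l (S r)) as [->|Hne].
    + f_equal. apply sumR_ext. intros j Hj. destruct (Nat.ltb_spec j (S r)); [reflexivity|lia].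
    + rewrite IH by lia. simpl. destruct (Nat.ltb_spec r l); [lia|]. ring.
Qed.

Lemma sumZ_delta lo hi i0 c : (~ (lo <= i0 <= hi)%Z -> c = 0) ->
  sumZ lo hi (fun i => if Z.eq_dec i i0 then c else 0) = c.
Proof.
  intros Hc. unfold sumZ.
  assert (Hind : forall n, sumR n (fun j => if Z.eq_dec (lo + Z.of_nat j) i0 then c else 0) =
     if Z_le_dec lo i0 then (if Z_lt_dec i0 (lo + Z.of_nat n) then c else 0) else 0).
  { induction n as [|n IH]; simpl.
    - destruct (Z_le_dec lo i0); [destruct (Z_lt_dec i0 (lo + 0)); [lia|]|]; reflexivity.
    - rewrite IH. destruct (Z.eq_dec (lo + Z.of_nat n) i0);
      destruct (Z_le_dec lo i0); try destruct (Z_lt_dec i0 (lo + Z.of_nat n));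
      try destruct (Z_lt_dec i0 (lo + Z.pos (Pos.of_succ_nat n))); try lia; ring. }
  rewrite Hind.
  destruct (Z_le_dec lo i0); [destruct (Z_lt_dec i0 (lo + Z.of_nat (Z.to_nat (hi - lo + 1))))|];
    auto; symmetry; apply Hc; lia.
Qed.

Lemma incr_nat_lt (y : nat -> R) n : (forall j, (j < n)%nat -> y j < y (S j)) ->
  forall a b, (a < b)%nat -> (b <= n)%nat -> y a < y b.
Proof.
  intros H a b Hab. induction Hab as [|b Hab IH]; intros Hb; [apply H; lia|].
  apply Rlt_trans with (y b); [apply IH; lia|apply H; lia].
Qed.

Lemma incr_nat_le (y : nat -> R) n : (forall j, (j < n)%nat -> y j < y (S j)) ->
  forall a b, (a <= b)%nat -> (b <= n)%nat -> y a <= y b.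
Proof.
  intros H a b Hab Hb. destruct (Nat.eq_dec a b) as [->|]; [lra|].
  left. apply (incr_nat_lt y n H); lia.
Qed.

Lemma strictly_increasing_lt (t : Z -> R) : strictly_increasing t ->
  forall i j, (i < j)%Z -> t i < t j.
Proof.
  intros Ht i j Hij.
  assert (Hsucc : forall n, t i < t (i + Z.of_nat (S n))%Z).
  { induction n as [|n IH].
    - apply Ht.
    - apply Rlt_trans with (1 := IH).
      replace (i + Z.of_nat (S (S n)))%Z with ((i + Z.of_nat (S n)) + 1)%Z by lia. apply Ht. }
  replace j with (i + Z.of_nat (S (Z.to_nat (j - i - 1))))%Z by lia. apply Hsucc.
Qed.

Lemma strictly_increasing_le (t : Z -> R) : strictly_increasing t ->
  forall i j, (i <= j)%Z -> t i <= t j.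
Proof.
  intros Ht i j H. destruct (Z.eq_dec i j) as [->|]; [lra|].
  left. apply strictly_increasing_lt; auto; lia.
Qed.

Lemma derivable_pt_lim_sumR n (F F' : nat -> R -> R) x :
  (forall j, (j < n)%nat -> derivable_pt_lim (F j) x (F' j x)) ->
  derivable_pt_lim (fun y => sumR n (fun j => F j y)) x (sumR n (fun j => F' j x)).
Proof.
  induction n as [|n IH]; intros H; simpl.
  - exact (derivable_pt_lim_const 0 x).
  - exact (derivable_pt_lim_plus _ _ x _ _ (IH (fun j Hj => H j ltac:(lia))) (H n ltac:(lia))).
Qed.

Lemma derivable_pt_lim_mult_cst f a x l : derivable_pt_lim f x l ->
  derivable_pt_lim (fun y => a * f y) x (a * l).
Proof. exact (derivable_pt_lim_scal f a x l). Qed.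

Lemma derivable_pt_lim_add f g x l1 l2 : derivable_pt_lim f x l1 -> derivable_pt_lim g x l2 ->
  derivable_pt_lim (fun y => f y + g y) x (l1 + l2).
Proof. exact (derivable_pt_lim_plus f g x l1 l2). Qed.

Lemma derivable_pt_lim_sub f g x l1 l2 : derivable_pt_lim f x l1 -> derivable_pt_lim g x l2 ->
  derivable_pt_lim (fun y => f y - g y) x (l1 - l2).
Proof. exact (derivable_pt_lim_minus f g x l1 l2). Qed.

Lemma derivable_pt_lim_pow_shift a n x :
  derivable_pt_lim (fun y => (y - a) ^ n) x (INR n * (x - a) ^ pred n).
Proof.
  replace (INR n * (x - a) ^ pred n) with (INR n * (x - a) ^ pred n * (1 - 0)) by ring.
  apply (derivable_pt_lim_comp (fun y => y - a) (fun y => y ^ n)).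
  - exact (derivable_pt_lim_minus _ _ x _ _ (derivable_pt_lim_id x) (derivable_pt_lim_const a x)).
  - apply derivable_pt_lim_pow.
Qed.

Lemma derivable_pt_lim_locally_zero f a b x l : a < x < b ->
  (forall y, a < y < b -> f y = 0) -> derivable_pt_lim f x l -> l = 0.
Proof.
  intros Hx Hf Hd. apply (uniqueness_limite f x); [exact Hd|].
  apply (derivable_pt_lim_locally_ext (fun _ => 0) f x a b 0 Hx); [intros; symmetry; auto|].
  apply derivable_pt_lim_const.
Qed.

Lemma constant_of_null_derivative f : (forall x, derivable_pt_lim f x 0) -> forall x y, f x = f y.
Proof.
  intros H.
  apply (null_derivative_1 f (fun x => exist _ 0 (H x) : derivable_pt f x)). reflexivity.
Qed.

Lemma derivable_pt_lim_continuity_pt f x l : derivable_pt_lim f x l -> continuity_pt f x.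
Proof. intros H. apply derivable_continuous_pt. exists l. exact H. Qed.

Lemma continuity_pt_eq_of_eq_near f g t : continuity_pt f t -> continuity_pt g t ->
  (forall delta, 0 < delta -> exists x, Rabs (x - t) < delta /\ f x = g x) -> f t = g t.
Proof.
  intros Hf Hg Hnear.
  assert (Hc : continuity_pt (fun x => f x - g x) t) by exact (continuity_pt_minus f g t Hf Hg).
  apply Rminus_diag_uniq. apply NNPP. intros Hne.
  destruct (Hc (Rabs (f t - g t)) (Rabs_pos_lt _ Hne)) as [alp [Halp Hball]].
  destruct (Hnear alp Halp) as [x [Hx Hfg]].
  destruct (Req_dec x t) as [->|Hxt]; [apply Hne; lra|].
  specialize (Hball x (conj (conj I (not_eq_sym Hxt)) Hx)). simpl in Hball.
  unfold Rdist in Hball. rewrite Hfg, Rminus_diag, Rminus_0_l, Rabs_Ropp in Hball. lra.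
Qed.

Lemma exists_near_left u t delta : u < t -> 0 < delta ->
  exists x, Rabs (x - t) < delta /\ u < x < t.
Proof.
  intros Hu Hd. exists (t - Rmin delta (t - u) / 2).
  pose proof (Rmin_l delta (t - u)). pose proof (Rmin_r delta (t - u)).
  pose proof (Rmin_glb_lt delta (t - u) 0 Hd ltac:(lra)).
  rewrite Rabs_left by lra. lra.
Qed.

Lemma exists_near_right t v delta : t < v -> 0 < delta ->
  exists x, Rabs (x - t) < delta /\ t < x < v.
Proof.
  intros Hv Hd. exists (t + Rmin delta (v - t) / 2).
  pose proof (Rmin_l delta (v - t)). pose proof (Rmin_r delta (v - t)).
  pose proof (Rmin_glb_lt delta (v - t) 0 Hd ltac:(lra)).
  rewrite Rabs_right by lra. lra.
Qed.

Lemma deriv_chain_continuity n D : deriv_chain n D -> continuity (D n) ->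
  forall j, (j <= n)%nat -> continuity (D j).
Proof.
  intros Hc Hn j Hj x. destruct (Nat.eq_dec j n) as [->|]; [apply Hn|].
  apply (derivable_pt_lim_continuity_pt _ _ (D (S j) x)). apply Hc. lia.
Qed.

Lemma deriv_chain_eq_on n D E u v : deriv_chain n D -> deriv_chain n E ->
  (forall x, u < x < v -> D O x = E O x) ->
  forall j, (j <= n)%nat -> forall x, u < x < v -> D j x = E j x.
Proof.
  intros HD HE H0. induction j as [|j IH]; intros Hj x Hx; [auto|].
  apply (uniqueness_limite (D j) x); [apply HD; lia|].
  apply (derivable_pt_lim_locally_ext (E j) (D j) x u v _ Hx).
  - intros; symmetry; apply IH; auto; lia.
  - apply HE; lia.
Qed.

Lemma deriv_chain_root_pow p : forall (H : nat -> R -> R) tau,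
  deriv_chain (S p) H -> (forall x, H (S p) x = 0) -> (forall j, (j < p)%nat -> H j tau = 0) ->
  exists c, forall x, H O x = c * (x - tau) ^ p.
Proof.
  induction p as [|p IH]; intros H tau Hc Hz H0.
  - exists (H O tau). intros x. simpl. rewrite Rmult_1_r. apply constant_of_null_derivative.
    intros y. rewrite <- (Hz y). apply Hc. lia.
  - destruct (IH (fun j => H (S j)) tau) as [c Hc1].
    + intros j Hj x. apply Hc. lia.
    + exact Hz.
    + intros j Hj. apply H0. lia.
    + assert (HS : INR (S p) <> 0) by (apply not_0_INR; lia).
      exists (c / INR (S p)). intros x.
      assert (E : forall y, H O y - c / INR (S p) * (y - tau) ^ S p =
                            H O tau - c / INR (S p) * (tau - tau) ^ S p).
      { intros y. apply (constant_of_null_derivative (fun y => H O y - c / INR (S p) * (y - tau) ^ S p)).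
        intros z. replace 0 with (H 1%nat z - c / INR (S p) * (INR (S p) * (z - tau) ^ pred (S p))).
        - apply derivable_pt_lim_sub; [apply Hc; lia|].
          apply derivable_pt_lim_mult_cst, derivable_pt_lim_pow_shift.
        - rewrite Hc1. simpl pred. field. exact HS. }
      specialize (E x). rewrite H0 in E by lia.
      replace ((tau - tau) ^ S p) with 0 in E by (simpl; ring). lra.
Qed.

Lemma Ck_ext k f g : (forall x, f x = g x) -> Ck k f -> Ck k g.
Proof. intros H [D [H0 H1]]. exists D. split; [intros; rewrite H0; auto|auto]. Qed.

Lemma Ck_lin k a b f g : Ck k f -> Ck k g -> Ck k (fun x => a * f x + b * g x).
Proof.
  intros [D1 [H10 [H1c H1k]]] [D2 [H20 [H2c H2k]]].
  exists (fun j x => a * D1 j x + b * D2 j x). split; [|split].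
  - intros; rewrite H10, H20; reflexivity.
  - intros j Hj x. apply derivable_pt_lim_add; apply derivable_pt_lim_mult_cst; auto.
  - exact (continuity_plus _ _ (continuity_scal _ a H1k) (continuity_scal _ b H2k)).
Qed.

Lemma Ck_0 k : Ck k (fun _ => 0).
Proof.
  exists (fun _ _ => 0). split; [reflexivity|split].
  - intros j Hj x. apply derivable_pt_lim_const.
  - apply continuity_const. intros ? ?; reflexivity.
Qed.

Lemma Ck_continuity k f : Ck k f -> continuity f.
Proof.
  intros [D [HD0 [Hc Hk]]] x.
  apply (continuity_pt_locally_ext (D O) f 1 x Rlt_0_1); [intros; apply HD0|].
  apply (deriv_chain_continuity k D Hc Hk O); lia.
Qed.

Definition poly_fun (n : nat) (f : R -> R) : Prop :=
  exists c : nat -> R, forall x, f x = sumR n (fun j => c j * x ^ j).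

Lemma poly_fun_ext n f g : (forall x, f x = g x) -> poly_fun n f -> poly_fun n g.
Proof. intros H [c Hc]. exists c. intros x. rewrite <- H. auto. Qed.

Lemma poly_fun_lin n a b f g : poly_fun n f -> poly_fun n g -> poly_fun n (fun x => a * f x + b * g x).
Proof.
  intros [c Hc] [d Hd]. exists (fun j => a * c j + b * d j). intros x.
  rewrite Hc, Hd, <- sumR_lin. apply sumR_ext. intros; ring.
Qed.

Lemma poly_fun_0 n : poly_fun n (fun _ => 0).
Proof. exists (fun _ => 0). intros x. rewrite sumR_zero; auto. intros; ring. Qed.

Lemma poly_fun_sumR n k (F : nat -> R -> R) : (forall j, (j < n)%nat -> poly_fun k (F j)) ->
  poly_fun k (fun x => sumR n (fun j => F j x)).
Proof.
  induction n as [|n IH]; intros H; simpl; [apply poly_fun_0|].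
  apply (poly_fun_ext k (fun x => 1 * sumR n (fun j => F j x) + 1 * F n x)); [intros; ring|].
  apply poly_fun_lin; [apply IH; intros; apply H; lia|apply H; lia].
Qed.

Lemma poly_fun_trunc n f : poly_fun n f -> exists c, (forall j, (n <= j)%nat -> c j = 0) /\
  forall x, f x = sumR n (fun j => c j * x ^ j).
Proof.
  intros [c Hc]. exists (fun j => if (j <? n)%nat then c j else 0). split.
  - intros j Hj. destruct (Nat.ltb_spec j n); [lia|reflexivity].
  - intros x. rewrite Hc. apply sumR_ext. intros j Hj. destruct (Nat.ltb_spec j n); [reflexivity|lia].
Qed.

Lemma poly_fun_mul_shift n a f : poly_fun n f -> poly_fun (S n) (fun x => (x - a) * f x).
Proof.
  intros H. destruct (poly_fun_trunc n f H) as [c [Hc0 Hc]].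
  exists (fun j => (match j with O => 0 | S i => c i end) - a * c j). intros x.
  rewrite Hc, (sumR_ext (S n) _ (fun j => 1 * ((match j with O => 0 | S i => c i end) * x ^ j)
                                         + (- a) * (c j * x ^ j))) by (intros; ring).
  rewrite sumR_lin, sumR_succ_l.
  change (sumR (S n) (fun j => c j * x ^ j)) with (sumR n (fun j => c j * x ^ j) + c n * x ^ n).
  rewrite (Hc0 n) by lia.
  assert (E : sumR n (fun j => c j * (x * x ^ j)) = x * sumR n (fun j => c j * x ^ j)).
  { rewrite <- sumR_scal. apply sumR_ext. intros; ring. }
  simpl pow. rewrite E. ring.
Qed.

Lemma poly_fun_pow_shift a q : poly_fun (S q) (fun x => (x - a) ^ q).
Proof.
  induction q as [|q IH].
  - exists (fun _ => 1). intros x. simpl. ring.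
  - apply (poly_fun_ext _ (fun x => (x - a) * (x - a) ^ q)); [reflexivity|].
    apply poly_fun_mul_shift. exact IH.
Qed.

Lemma poly_fun_deriv n f : poly_fun (S n) f ->
  exists f', poly_fun n f' /\ forall x, derivable_pt_lim f x (f' x).
Proof.
  intros [c Hc]. exists (fun x => sumR n (fun j => c (S j) * INR (S j) * x ^ j)). split.
  - exists (fun j => c (S j) * INR (S j)). reflexivity.
  - intros x. apply (derivable_pt_lim_ext (fun y => sumR (S n) (fun j => c j * y ^ j)));
      [intros; symmetry; apply Hc|].
    replace (sumR n (fun j => c (S j) * INR (S j) * x ^ j)) with
      (sumR (S n) (fun j => c j * (INR j * x ^ pred j))).
    + apply (derivable_pt_lim_sumR (S n) (fun j y => c j * y ^ j) (fun j y => c j * (INR j * y ^ pred j))).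
      intros j _. apply derivable_pt_lim_mult_cst, derivable_pt_lim_pow.
    + rewrite sumR_succ_l. simpl. rewrite Rmult_0_l, Rmult_0_r, Rplus_0_l.
      apply sumR_ext. intros; ring.
Qed.

Lemma poly_fun_zero_on_interval n f a b : poly_fun n f -> a < b ->
  (forall x, a < x < b -> f x = 0) -> forall x, f x = 0.
Proof.
  revert f. induction n as [|n IH]; intros f Hf Hab H0.
  - destruct Hf as [c Hc]. exact Hc.
  - destruct (poly_fun_deriv n f Hf) as [f' [Hf' Hd]].
    assert (Z : forall x, f' x = 0).
    { apply (IH f' Hf' Hab). intros x Hx. apply (derivable_pt_lim_locally_zero f a b x); auto. }
    intros x. rewrite (constant_of_null_derivative f) with (y := (a + b) / 2).
    + apply H0; lra.
    + intros y. rewrite <- (Z y). apply Hd.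
Qed.

Lemma poly_fun_deriv_chain n f : poly_fun n f ->
  exists H : nat -> R -> R, (forall x, H O x = f x) /\ deriv_chain n H /\ (forall x, H n x = 0).
Proof.
  revert f. induction n as [|n IH]; intros f Hf.
  - exists (fun _ => f). split; [reflexivity|]. split; [intros j Hj; lia|].
    destruct Hf as [c Hc]. exact Hc.
  - destruct (poly_fun_deriv n f Hf) as [f' [Hf' Hd]].
    destruct (IH f' Hf') as [H' [H0 [Hc Hn]]].
    exists (fun j => match j with O => f | S j => H' j end). split; [reflexivity|]. split; [|exact Hn].
    intros [|j] Hj x; simpl.
    + rewrite H0. apply Hd.
    + apply Hc. lia.
Qed.

Lemma tpow_0 q : tpow q 0 = 0.
Proof. unfold tpow. destruct (Rlt_dec 0 0); [lra|reflexivity]. Qed.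

Lemma tpow_pos q x : 0 < x -> tpow q x = x ^ q.
Proof. unfold tpow. destruct (Rlt_dec 0 x); [reflexivity|lra]. Qed.

Lemma tpow_nonpos q x : x <= 0 -> tpow q x = 0.
Proof. unfold tpow. destruct (Rlt_dec 0 x); [lra|reflexivity]. Qed.

Lemma derivable_pt_lim_tpow q a x : (2 <= q)%nat ->
  derivable_pt_lim (fun y => tpow q (y - a)) x (INR q * tpow (q - 1) (x - a)).
Proof.
  intros Hq. destruct (Rtotal_order x a) as [Hlt|[<-|Hgt]].
  - rewrite tpow_nonpos, Rmult_0_r by lra.
    apply (derivable_pt_lim_locally_ext (fun _ => 0) _ x (x - 1) a); [lra| |apply derivable_pt_lim_const].
    intros y Hy. rewrite tpow_nonpos by lra. reflexivity.
  - rewrite Rminus_diag, tpow_0, Rmult_0_r.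
    intros eps Heps. assert (Hp : 0 < Rmin 1 eps) by (apply Rmin_pos; lra).
    exists (mkposreal _ Hp). intros h Hh0 Hh. simpl in Hh.
    pose proof (Rmin_l 1 eps). pose proof (Rmin_r 1 eps).
    replace (x + h - x) with h by ring. rewrite Rminus_diag, tpow_0.
    destruct (Rlt_dec 0 h) as [Hpos|Hnpos].
    + rewrite tpow_pos by auto. rewrite Rabs_right in Hh by lra.
      destruct q as [|[|q]]; [lia|lia|].
      replace ((h ^ S (S q) - 0) / h - 0) with (h * h ^ q) by (simpl; field; lra).
      assert (h ^ q <= 1) by (rewrite <- (pow1 q); apply pow_incr; lra).
      assert (0 <= h ^ q) by (apply pow_le; lra).
      rewrite Rabs_right by nra. nra.
    + rewrite tpow_nonpos by lra. replace ((0 - 0) / h - 0) with 0 by (field; auto).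
      rewrite Rabs_R0. lra.
  - rewrite tpow_pos by lra.
    apply (derivable_pt_lim_locally_ext (fun y => (y - a) ^ q) _ x a (x + 1)); [lra| |].
    + intros y Hy. rewrite tpow_pos by lra. reflexivity.
    + replace (q - 1)%nat with (pred q) by lia. apply derivable_pt_lim_pow_shift.
Qed.

Lemma continuity_tpow1 a : continuity (fun y => tpow 1 (y - a)).
Proof.
  intros x0 eps Heps. exists eps. split; auto. intros x [_ Hx]. simpl in *. unfold Rdist in *.
  apply Rle_lt_trans with (2 := Hx). unfold tpow.
  destruct (Rlt_dec 0 (x - a)), (Rlt_dec 0 (x0 - a)); simpl; rewrite ?Rmult_1_r;
    unfold Rabs; repeat destruct Rcase_abs; lra.
Qed.

Fixpoint fallfact (p j : nat) : R :=
  match j with O => 1 | S j' => fallfact p j' * INR (p - j') end.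

Lemma fallfact_neq0 p j : (j <= p)%nat -> fallfact p j <> 0.
Proof.
  induction j as [|j IH]; simpl; intros H; [lra|].
  apply Rmult_integral_contrapositive. split; [apply IH; lia|apply not_0_INR; lia].
Qed.

Lemma derivable_pt_lim_fallfact_tpow p a j x : (j + 2 <= p)%nat ->
  derivable_pt_lim (fun y => fallfact p j * tpow (p - j) (y - a)) x
                   (fallfact p (S j) * tpow (p - S j) (x - a)).
Proof.
  intros H. simpl fallfact. replace (p - S j)%nat with (p - j - 1)%nat by lia.
  rewrite Rmult_assoc. apply derivable_pt_lim_mult_cst, derivable_pt_lim_tpow. lia.
Qed.

Lemma Ck_tpow m a : (2 <= m)%nat -> Ck (m - 2) (fun x => tpow (m - 1) (x - a)).
Proof.
  intros Hm. exists (fun j x => fallfact (m - 1) j * tpow (m - 1 - j) (x - a)). split; [|split].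
  - intros x. simpl. rewrite Nat.sub_0_r. ring.
  - intros j Hj x. apply derivable_pt_lim_fallfact_tpow. lia.
  - replace (m - 1 - (m - 2))%nat with 1%nat by lia.
    exact (continuity_scal _ _ (continuity_tpow1 a)).
Qed.

Lemma nth_deriv_tpow_sumR p n j (e y : nat -> R) f g : (j < p)%nat ->
  (forall x, f x = sumR n (fun i => e i * tpow p (x - y i))) -> nth_deriv j f g ->
  forall x, g x = sumR n (fun i => e i * fallfact p j * tpow (p - j) (x - y i)).
Proof.
  intros Hj Hf [D [HD0 [HDc HDj]]].
  assert (HD : forall j', (j' <= j)%nat -> forall x,
     D j' x = sumR n (fun i => e i * (fallfact p j' * tpow (p - j') (x - y i)))).
  { induction j' as [|j' IH]; intros Hj' x.
    - rewrite HD0, Hf. apply sumR_ext. intros. simpl. rewrite Nat.sub_0_r. ring.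
    - apply (uniqueness_limite (D j') x); [apply HDc; lia|].
      apply (derivable_pt_lim_ext (fun x => sumR n (fun i => e i * (fallfact p j' * tpow (p - j') (x - y i)))));
        [intros; symmetry; apply IH; lia|].
      apply (derivable_pt_lim_sumR n (fun i x => e i * (fallfact p j' * tpow (p - j') (x - y i)))
               (fun i x => e i * (fallfact p (S j') * tpow (p - S j') (x - y i)))).
      intros i _. apply derivable_pt_lim_mult_cst, derivable_pt_lim_fallfact_tpow. lia. }
  intros x. rewrite <- HDj, HD by lia. apply sumR_ext. intros; ring.
Qed.

Lemma pow_shift_single_zero c y p a b : a < b ->
  (forall x, a < x < b -> c * (x - y) ^ p = 0) -> c = 0.
Proof.
  intros Hab H.
  set (x := if Req_EM_T (a + (b - a) / 3) y then a + 2 * (b - a) / 3 else a + (b - a) / 3).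
  assert (Hx : a < x < b /\ x <> y) by (unfold x; destruct Req_EM_T; split; lra).
  destruct Hx as [Hx Hxy]. specialize (H x Hx).
  apply Rmult_integral in H. destruct H as [H|H]; [exact H|].
  exfalso. apply (pow_nonzero (x - y) p); [lra|exact H].
Qed.

Lemma sumR_pow_shift_zero_pred n q c (y : nat -> R) a b :
  (forall x, a < x < b -> sumR n (fun i => c i * (x - y i) ^ S q) = 0) ->
  forall x, a < x < b -> sumR n (fun i => c i * (x - y i) ^ q) = 0.
Proof.
  intros H x Hx.
  assert (HS : INR (S q) <> 0) by (apply not_0_INR; lia).
  assert (Hd : derivable_pt_lim (fun z => sumR n (fun i => c i * (z - y i) ^ S q)) x
                 (INR (S q) * sumR n (fun i => c i * (x - y i) ^ q))).
  { rewrite <- sumR_scal.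
    replace (sumR n (fun i => INR (S q) * (c i * (x - y i) ^ q)))
      with (sumR n (fun i => c i * (INR (S q) * (x - y i) ^ pred (S q))))
      by (apply sumR_ext; intros; simpl pred; ring).
    apply (derivable_pt_lim_sumR n (fun i z => c i * (z - y i) ^ S q)
             (fun i z => c i * (INR (S q) * (z - y i) ^ pred (S q)))).
    intros i _. apply derivable_pt_lim_mult_cst, derivable_pt_lim_pow_shift. }
  pose proof (derivable_pt_lim_locally_zero _ a b x _ Hx H Hd) as Z.
  apply Rmult_integral in Z. destruct Z as [Z|Z]; [contradiction|exact Z].
Qed.

(* Multiply the derived relation by [x - y n] and subtract the original one:
   this kills the last term and leaves a relation of degree [q] on the others. *)
Lemma pow_shift_lin_indep n : forall p (c y : nat -> R) a b, (n <= S p)%nat -> a < b ->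
  (forall i j, (i < n)%nat -> (j < n)%nat -> i <> j -> y i <> y j) ->
  (forall x, a < x < b -> sumR n (fun i => c i * (x - y i) ^ p) = 0) ->
  forall i, (i < n)%nat -> c i = 0.
Proof.
  induction n as [|n IH]; intros p c y a b Hnp Hab Hy H; [intros; lia|].
  assert (Hlow : forall i, (i < n)%nat -> c i = 0).
  { destruct p as [|q]; [intros; lia|].
    assert (Hrel : forall i, (i < n)%nat -> c i * (y i - y n) = 0).
    { apply (IH q (fun i => c i * (y i - y n)) y a b); [lia|exact Hab| |].
      - intros i j Hi Hj. apply Hy; lia.
      - intros x Hx.
        assert (Hd := sumR_pow_shift_zero_pred (S n) q c y a b H x Hx).
        specialize (H x Hx). change (sumR (S n) ?g) with (sumR n g + g n) in H, Hd.
        transitivity ((x - y n) * (sumR n (fun i => c i * (x - y i) ^ q) + c n * (x - y n) ^ q)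
          - (sumR n (fun i => c i * (x - y i) ^ S q) + c n * (x - y n) ^ S q)).
        + rewrite (sumR_ext n _ (fun i => (x - y n) * (c i * (x - y i) ^ q)
                                         + (-1) * (c i * (x - y i) ^ S q))) by (intros; simpl; ring).
          rewrite sumR_lin. simpl. ring.
        + rewrite Hd, H. ring. }
    intros i Hi. specialize (Hrel i Hi).
    apply Rmult_integral in Hrel. destruct Hrel as [Hc|Hc]; [exact Hc|].
    exfalso. apply (Hy i n); [lia|lia|lia|lra]. }
  intros i Hi. destruct (Nat.eq_dec i n) as [->|]; [|apply Hlow; lia].
  apply (pow_shift_single_zero (c n) (y n) p a b Hab). intros x Hx.
  specialize (H x Hx). simpl in H. rewrite sumR_zero in H; [lra|].
  intros j Hj. rewrite Hlow by lia. ring.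
Qed.

(* The derivatives of order [< p] of [f] are continuous at [tau], so those of [A] and [B]
   agree there; [B - A] then has a root of order [p] at [tau]. *)
Lemma Ck_poly_pieces_jump p f A B u tau v : (1 <= p)%nat -> Ck (p - 1) f -> u < tau < v ->
  poly_fun (S p) A -> poly_fun (S p) B ->
  (forall x, u < x < tau -> f x = A x) -> (forall x, tau < x < v -> f x = B x) ->
  exists c, forall x, B x - A x = c * (x - tau) ^ p.
Proof.
  intros Hp [D [HD0 [HDc HDk]]] Htau HA HB HfA HfB.
  destruct (poly_fun_deriv_chain _ _ HA) as [DA [HDA0 [HDAc HDAz]]].
  destruct (poly_fun_deriv_chain _ _ HB) as [DB [HDB0 [HDBc HDBz]]].
  assert (Hleft := deriv_chain_eq_on (p - 1) D DA u tau HDc (fun j Hj => HDAc j ltac:(lia))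
                     (fun x Hx => eq_trans (HD0 x) (eq_trans (HfA x Hx) (eq_sym (HDA0 x))))).
  assert (Hright := deriv_chain_eq_on (p - 1) D DB tau v HDc (fun j Hj => HDBc j ltac:(lia))
                     (fun x Hx => eq_trans (HD0 x) (eq_trans (HfB x Hx) (eq_sym (HDB0 x))))).
  assert (Hjump : forall j, (j < p)%nat -> DB j tau - DA j tau = 0).
  { intros j Hj.
    assert (HDj := deriv_chain_continuity (p - 1) D HDc HDk j ltac:(lia) tau).
    rewrite <- (continuity_pt_eq_of_eq_near (D j) (DA j) tau HDj
                 (derivable_pt_lim_continuity_pt _ _ _ (HDAc j ltac:(lia) tau))).
    - rewrite <- (continuity_pt_eq_of_eq_near (D j) (DB j) tau HDj
                   (derivable_pt_lim_continuity_pt _ _ _ (HDBc j ltac:(lia) tau))).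
      + ring.
      + intros delta Hd. destruct (exists_near_right tau v delta ltac:(lra) Hd) as [x [Hx1 Hx2]].
        exists x. split; [exact Hx1|apply Hright; auto; lia].
    - intros delta Hd. destruct (exists_near_left u tau delta ltac:(lra) Hd) as [x [Hx1 Hx2]].
      exists x. split; [exact Hx1|apply Hleft; auto; lia]. }
  destruct (deriv_chain_root_pow p (fun j x => DB j x - DA j x) tau) as [c Hc].
  - intros j Hj x. apply derivable_pt_lim_sub; [apply HDBc|apply HDAc]; exact Hj.
  - intros x. rewrite HDAz, HDBz. ring.
  - exact Hjump.
  - exists c. intros x. rewrite <- Hc, HDA0, HDB0. reflexivity.
Qed.

Lemma tpow_repr_step p n f (y e : nat -> R) J v B : (1 <= p)%nat -> Ck (p - 1) f ->
  (forall j, (j < n)%nat -> y j < y (S j)) -> (J <= n)%nat ->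
  (forall x, x <= y J -> f x = sumR J (fun i => e i * tpow p (x - y i))) ->
  y J < v -> poly_fun (S p) B -> (forall x, y J < x < v -> f x = B x) ->
  exists e', (forall x, x <= y J -> f x = sumR (S J) (fun i => e' i * tpow p (x - y i))) /\
             (forall x, y J < x -> B x = sumR (S J) (fun i => e' i * tpow p (x - y i))).
Proof.
  intros Hp Hf Hy HJ Hrepr Hv HB HfB.
  set (u := match J with O => y O - 1 | S J' => y J' end).
  assert (Hu : u < y J) by (unfold u; destruct J; [lra|apply Hy; lia]).
  assert (Hui : forall i, (i < J)%nat -> y i <= u).
  { intros i Hi. unfold u. destruct J; [lia|]. apply (incr_nat_le y n Hy); lia. }
  set (A := fun x => sumR J (fun i => e i * (x - y i) ^ p)).
  assert (HA : poly_fun (S p) A).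
  { apply poly_fun_sumR. intros j _.
    apply (poly_fun_ext _ (fun x => e j * (x - y j) ^ p + 0 * 0)); [intros; ring|].
    apply poly_fun_lin; [apply poly_fun_pow_shift|apply poly_fun_0]. }
  assert (EA : forall x, u < x -> sumR J (fun i => e i * tpow p (x - y i)) = A x).
  { intros x Hx. apply sumR_ext. intros i Hi. rewrite tpow_pos; [reflexivity|].
    specialize (Hui i Hi). lra. }
  destruct (Ck_poly_pieces_jump p f A B u (y J) v Hp Hf (conj Hu Hv) HA HB) as [c Hc].
  - intros x Hx. rewrite Hrepr by lra. apply EA; lra.
  - exact HfB.
  - exists (fun i => if (i =? J)%nat then c else e i).
    assert (ES : forall x, sumR (S J) (fun i => (if (i =? J)%nat then c else e i) * tpow p (x - y i)) =
       sumR J (fun i => e i * tpow p (x - y i)) + c * tpow p (x - y J)).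
    { intros x. simpl. rewrite Nat.eqb_refl. f_equal. apply sumR_ext. intros i Hi.
      destruct (Nat.eqb_spec i J); [lia|reflexivity]. }
    split.
    + intros x Hx. rewrite ES, (tpow_nonpos p (x - y J)), Hrepr by lra. ring.
    + intros x Hx. rewrite ES, tpow_pos, EA by lra. specialize (Hc x). lra.
Qed.

Lemma tpow_repr p n f (y : nat -> R) : (1 <= p)%nat -> Ck (p - 1) f ->
  (forall j, (j < n)%nat -> y j < y (S j)) ->
  (forall x, x < y O -> f x = 0) -> (forall x, y n < x -> f x = 0) ->
  (forall j, (j < n)%nat -> poly_on (S p) (y j) (y (S j)) f) ->
  exists e, forall x, f x = sumR (S n) (fun i => e i * tpow p (x - y i)).
Proof.
  intros Hp Hf Hy H0 Hn Hpol.
  assert (Hpartial : forall J, (J <= n)%nat ->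
            exists e, forall x, x <= y J -> f x = sumR J (fun i => e i * tpow p (x - y i))).
  { induction J as [|J IH]; intros HJ.
    - exists (fun _ => 0). intros x [Hx| ->]; [apply H0, Hx|]. simpl.
      apply (continuity_pt_eq_of_eq_near f (fun _ => 0) (y O) (Ck_continuity _ f Hf (y O)));
        [apply continuity_pt_const; intros ? ?; reflexivity|].
      intros delta Hd. destruct (exists_near_left (y O - 1) (y O) delta ltac:(lra) Hd) as [x [Hx1 Hx2]].
      exists x. split; [exact Hx1|apply H0; lra].
    - destruct IH as [e He]; [lia|].
      destruct (Hpol J ltac:(lia)) as [cB HcB].
      destruct (tpow_repr_step p n f y e J (y (S J)) (fun x => sumR (S p) (fun j => cB j * x ^ j))
                  Hp Hf Hy ltac:(lia) He (Hy J ltac:(lia)) (ex_intro _ cB (fun _ => eq_refl)))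
        as [e' [He1 He2]].
      + intros x Hx. apply HcB. lra.
      + exists e'. intros x Hx. destruct (Rle_dec x (y J)); [auto|].
        rewrite <- He2 by lra. apply HcB. lra. }
  destruct (Hpartial n ltac:(lia)) as [e He].
  destruct (tpow_repr_step p n f y e n (y n + 1) (fun _ => 0) Hp Hf Hy ltac:(lia) He
              ltac:(lra) (poly_fun_0 _)) as [e' [He1 He2]].
  - intros x Hx. apply Hn; lra.
  - exists e'. intros x. destruct (Rle_dec x (y n)); [auto|].
    rewrite <- He2 by lra. apply Hn. lra.
Qed.

Lemma poly_on_ext n a b f g : (forall x, a < x <= b -> f x = g x) -> poly_on n a b f -> poly_on n a b g.
Proof. intros H [c Hc]. exists c. intros x Hx. rewrite <- H by auto. auto. Qed.

Lemma poly_on_lin n u v a b f g :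
  poly_on n u v f -> poly_on n u v g -> poly_on n u v (fun x => a * f x + b * g x).
Proof.
  intros [c Hc] [d Hd]. exists (fun j => a * c j + b * d j). intros x Hx.
  rewrite Hc, Hd, <- sumR_lin by auto. apply sumR_ext. intros; ring.
Qed.

Lemma poly_on_of_poly_fun n u v f : poly_fun n f -> poly_on n u v f.
Proof. intros [c Hc]. exists c. intros; auto. Qed.

Lemma poly_on_0 n u v : poly_on n u v (fun _ => 0).
Proof. apply poly_on_of_poly_fun, poly_fun_0. Qed.

Lemma poly_on_sumR n k u v (F : nat -> R -> R) : (forall j, (j < n)%nat -> poly_on k u v (F j)) ->
  poly_on k u v (fun x => sumR n (fun j => F j x)).
Proof.
  induction n as [|n IH]; intros H; simpl; [apply poly_on_0|].
  apply (poly_on_ext k u v (fun x => 1 * sumR n (fun j => F j x) + 1 * F n x)); [intros; ring|].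
  apply poly_on_lin; [apply IH; intros; apply H; lia|apply H; lia].
Qed.

Lemma poly_on_sumZ_extract n u v lo hi (F : Z -> R -> R) c i0 (T : R -> R) :
  (~ (lo <= i0 <= hi)%Z -> c = 0) ->
  poly_on n u v (fun x => F i0 x - c * T x) -> (forall i, i <> i0 -> poly_on n u v (F i)) ->
  poly_on n u v (fun x => sumZ lo hi (fun i => F i x) - c * T x).
Proof.
  intros Hc Hi0 HF.
  apply (poly_on_ext n u v (fun x => sumZ lo hi (fun i =>
           F i x - (if Z.eq_dec i i0 then c else 0) * T x))).
  - intros x _.
    replace (c * T x) with (sumZ lo hi (fun i => if Z.eq_dec i i0 then c else 0) * T x)
      by (rewrite sumZ_delta; auto).
    unfold sumZ.
    rewrite (sumR_ext _ _ (fun j => 1 * F (lo + Z.of_nat j)%Z x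
               + (- T x) * (if Z.eq_dec (lo + Z.of_nat j) i0 then c else 0))) by (intros; ring).
    rewrite sumR_lin. ring.
  - apply poly_on_sumR. intros j _. destruct (Z.eq_dec (lo + Z.of_nat j) i0) as [->|Hne]; [exact Hi0|].
    apply (poly_on_ext n u v (F (lo + Z.of_nat j)%Z)); [intros; ring|]. apply HF, Hne.
Qed.

Lemma poly_on_tpow_outside n u v a : (1 <= n)%nat -> a <= u \/ v <= a ->
  poly_on n u v (fun x => tpow (n - 1) (x - a)).
Proof.
  intros Hn [H|H].
  - apply (poly_on_ext _ u v (fun x => (x - a) ^ (n - 1))).
    + intros x Hx. rewrite tpow_pos by lra. reflexivity.
    + replace n with (S (n - 1)) at 1 by lia. apply poly_on_of_poly_fun, poly_fun_pow_shift.
  - apply (poly_on_ext _ u v (fun _ => 0)); [|apply poly_on_0].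
    intros x Hx. rewrite tpow_nonpos by lra. reflexivity.
Qed.

Lemma poly_on_tpow_coef_0 m c u tau v : (1 <= m)%nat -> u < tau < v ->
  poly_on m u v (fun x => c * tpow (m - 1) (x - tau)) -> c = 0.
Proof.
  intros Hm Htau [P HP].
  assert (HP0 : forall x, sumR m (fun j => P j * x ^ j) = 0).
  { apply (poly_fun_zero_on_interval m _ u tau); [exists P; reflexivity|lra|].
    intros x Hx. rewrite <- HP by lra. rewrite tpow_nonpos by lra. ring. }
  apply (pow_shift_single_zero c tau (m - 1) tau v); [lra|].
  intros x Hx. rewrite <- (tpow_pos (m - 1)) by lra. rewrite HP, HP0 by lra. reflexivity.
Qed.

Lemma spline_ext m t f g : (forall x, f x = g x) -> spline m t f -> spline m t g.
Proof.
  intros H [Hk Hp]. split; [exact (Ck_ext _ f g H Hk)|].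
  intros i. apply (poly_on_ext _ _ _ f); auto.
Qed.

Lemma spline_lin m t a b f g : spline m t f -> spline m t g -> spline m t (fun x => a * f x + b * g x).
Proof. intros [Hf1 Hf2] [Hg1 Hg2]. split; [apply Ck_lin; auto|]. intros i. apply poly_on_lin; auto. Qed.

Lemma spline_0 m t : spline m t (fun _ => 0).
Proof. split; [apply Ck_0|]. intros; apply poly_on_0. Qed.

Lemma spline_sumR n m t (F : nat -> R -> R) : (forall j, (j < n)%nat -> spline m t (F j)) ->
  spline m t (fun x => sumR n (fun j => F j x)).
Proof.
  induction n as [|n IH]; intros H; simpl; [apply spline_0|].
  apply (spline_ext m t (fun x => 1 * sumR n (fun j => F j x) + 1 * F n x)); [intros; ring|].
  apply spline_lin; [apply IH; intros; apply H; lia|apply H; lia].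
Qed.

Lemma spline_tpow m t z : (2 <= m)%nat -> strictly_increasing t ->
  spline m t (fun x => tpow (m - 1) (x - t z)).
Proof.
  intros Hm Ht. split; [apply Ck_tpow, Hm|]. intros i. apply poly_on_tpow_outside; [lia|].
  destruct (Z_le_dec z i); [left|right]; apply strictly_increasing_le; auto; lia.
Qed.

Lemma Bspline_tpow_repr r xi N : (2 <= r)%nat -> (forall j, (j < r)%nat -> xi j < xi (S j)) ->
  is_Bspline r xi N -> exists e, forall x, N x = sumR (S r) (fun i => e i * tpow (r - 1) (x - xi i)).
Proof.
  intros Hr Hxi [_ [Hpol [HCk Hsupp]]].
  apply tpow_repr; [lia| |exact Hxi|intros; apply Hsupp; auto|intros; apply Hsupp; auto|].
  - replace (r - 1 - 1)%nat with (r - 2)%nat by lia. exact HCk.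
  - intros j Hj. replace (S (r - 1)) with r by lia. apply Hpol, Hj.
Qed.

(* Right of the support the truncated powers are plain powers [(x - xi i) ^ (r - 1)]; with
   one coefficient missing only [r] of them remain, and these are linearly independent. *)
Lemma Bspline_tpow_coef_neq0 r xi N e l : (1 <= r)%nat ->
  (forall j, (j < r)%nat -> xi j < xi (S j)) -> is_Bspline r xi N ->
  (forall x, N x = sumR (S r) (fun i => e i * tpow (r - 1) (x - xi i))) -> (l <= r)%nat -> e l <> 0.
Proof.
  intros Hr Hxi [[x0 Hx0] [_ [_ Hsupp]]] He Hl Hel.
  assert (Hrest : forall i, (i < r)%nat -> e (skip l i) = 0).
  { apply (pow_shift_lin_indep r (r - 1) (fun i => e (skip l i)) (fun i => xi (skip l i))
             (xi r) (xi r + 1)); [lia|lra| |].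
    - intros i j Hi Hj Hij.
      destruct (Nat.lt_total i j) as [Hlt|[->|Hgt]]; [|lia|apply not_eq_sym];
        apply Rlt_not_eq, (incr_nat_lt xi r Hxi); try apply skip_lt; auto;
        pose proof (skip_le l i); pose proof (skip_le l j); lia.
    - intros x Hx. rewrite <- (Hsupp x) by lra. rewrite He, (sumR_remove r l) by exact Hl.
      rewrite Hel, Rmult_0_l, Rplus_0_r. apply sumR_ext. intros i Hi.
      assert (xi (skip l i) <= xi r) by (apply (incr_nat_le xi r Hxi); pose proof (skip_le l i); lia).
      rewrite tpow_pos by lra. reflexivity. }
  apply Hx0. rewrite He, (sumR_remove r l), Hel by exact Hl. rewrite sumR_zero; [ring|].
  intros i Hi. rewrite Hrest by exact Hi. ring.
Qed.

Lemma Xi_lt m mt t1 k j : (j < (m + mt) / 2)%nat ->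
  Xi m mt t1 k j = t1 (2 * (k + 1 - Z.of_nat ((m + mt) / 2) + Z.of_nat j))%Z.
Proof. intros H. unfold Xi. destruct (Nat.ltb_spec j ((m + mt) / 2)); [reflexivity|lia]. Qed.

Lemma Xi_mid m mt t1 k : Xi m mt t1 k ((m + mt) / 2)%nat = t1 (2 * k + 1)%Z.
Proof. unfold Xi. rewrite Nat.ltb_irrefl, Nat.eqb_refl. reflexivity. Qed.

Lemma Xi_gt m mt t1 k j : ((m + mt) / 2 < j)%nat ->
  Xi m mt t1 k j = t1 (2 * (k + Z.of_nat j - Z.of_nat ((m + mt) / 2)))%Z.
Proof.
  intros H. unfold Xi. destruct (Nat.ltb_spec j ((m + mt) / 2)); [lia|].
  destruct (Nat.eqb_spec j ((m + mt) / 2)); [lia|reflexivity].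
Qed.

Lemma Xi_even m mt t1 k j : j <> ((m + mt) / 2)%nat -> exists z, Xi m mt t1 k j = t1 (2 * z)%Z.
Proof.
  intros H. destruct (Nat.lt_total j ((m + mt) / 2)) as [H'|[H'|H']]; [|lia|].
  - rewrite Xi_lt by exact H'. eexists; reflexivity.
  - rewrite Xi_gt by exact H'. eexists; reflexivity.
Qed.

Lemma half_bounds n : (3 <= n)%nat -> (1 <= n / 2 < n)%nat.
Proof.
  intros Hn. pose proof (Nat.div_mod_eq n 2). pose proof (Nat.mod_upper_bound n 2 ltac:(lia)). lia.
Qed.

Lemma Xi_incr m mt t1 k : (3 <= m + mt)%nat -> strictly_increasing t1 ->
  forall j, (j < m + mt)%nat -> Xi m mt t1 k j < Xi m mt t1 k (S j).
Proof.
  intros Hr Ht j Hj. destruct (half_bounds (m + mt) Hr) as [Hl1 Hl2].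
  destruct (Nat.lt_total (S j) ((m + mt) / 2)) as [H|[H|H]].
  - rewrite !Xi_lt by lia. apply strictly_increasing_lt; auto; lia.
  - rewrite Xi_lt, H, Xi_mid by lia. apply strictly_increasing_lt; auto; lia.
  - destruct (Nat.eq_dec j ((m + mt) / 2)) as [->|].
    + rewrite Xi_mid, Xi_gt by lia. apply strictly_increasing_lt; auto; lia.
    + rewrite !Xi_gt by lia. apply strictly_increasing_lt; auto; lia.
Qed.

Lemma wavelet_decomposition m mt (t1 : Z -> R) (N : R -> R) (alpha : R) (psi : R -> R) (k : Z) :
  (2 <= m)%nat -> (1 <= mt)%nat -> strictly_increasing t1 ->
  is_Bspline (m + mt) (Xi m mt t1 k) N -> alpha <> 0 ->
  (exists g, nth_deriv mt N g /\ forall x, psi x = alpha * g x) ->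
  exists gam, gam <> 0 /\ exists sigma, spline m (fun i => t1 (2 * i)%Z) sigma /\
    forall t, psi t = sigma t + gam * tpow (m - 1) (t - t1 (2 * k + 1)%Z).
Proof.
  intros Hm Hmt Ht1 HN Halpha [g [Hg Hpsi]].
  set (r := (m + mt)%nat). set (xi := Xi m mt t1 k). set (l := ((m + mt) / 2)%nat).
  assert (Hl : (l <= r)%nat) by (pose proof (half_bounds r ltac:(unfold r; lia)); unfold l, r in *; lia).
  assert (Hxi : forall j, (j < r)%nat -> xi j < xi (S j)) by (apply Xi_incr; auto; unfold r; lia).
  destruct (Bspline_tpow_repr r xi N ltac:(unfold r; lia) Hxi HN) as [e He].
  set (w := fun i => alpha * (e i * fallfact (r - 1) mt)).
  assert (Hpsi' : forall x, psi x = sumR (S r) (fun i => w i * tpow (m - 1) (x - xi i))).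
  { intros x. rewrite Hpsi, (nth_deriv_tpow_sumR (r - 1) (S r) mt e xi N g ltac:(unfold r; lia) He Hg).
    rewrite <- sumR_scal. replace (r - 1 - mt)%nat with (m - 1)%nat by (unfold r; lia).
    apply sumR_ext. intros; unfold w; ring. }
  exists (w l). split.
  { unfold w. apply Rmult_integral_contrapositive. split; [exact Halpha|].
    apply Rmult_integral_contrapositive. split.
    - apply (Bspline_tpow_coef_neq0 r xi N e l); auto. unfold r; lia.
    - apply fallfact_neq0. unfold r; lia. }
  exists (fun x => sumR r (fun i => w (skip l i) * tpow (m - 1) (x - xi (skip l i)))). split.
  - apply spline_sumR. intros i Hi.
    apply (spline_ext m _ (fun x => w (skip l i) * tpow (m - 1) (x - xi (skip l i)) + 0 * 0));
      [intros; ring|].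
    apply spline_lin; [|apply spline_0].
    destruct (Xi_even m mt t1 k (skip l i) (skip_neq l i)) as [z Hz].
    unfold xi. rewrite Hz. apply (spline_tpow m (fun i => t1 (2 * i)%Z) z Hm).
    intros i'. apply strictly_increasing_lt; auto; lia.
  - intros t. rewrite Hpsi', (sumR_remove r l) by exact Hl. unfold xi, l. rewrite Xi_mid. reflexivity.
Qed.

(* On [(t1 (2k), t1 (2k+2)]] every term of both expansions is a polynomial except the
   truncated powers at the odd knot [t1 (2k+1)]. *)
Lemma wavelet_coefficient m (t1 : Z -> R) (psi : Z -> R -> R) (gamma : Z -> R)
  (s0 : R -> R) (K L : Z) (d a : Z -> R) (k : Z) :
  (2 <= m)%nat -> strictly_increasing t1 ->
  (forall k, exists sigma, spline m (fun i => t1 (2 * i)%Z) sigma /\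
     forall t, psi k t = sigma t + gamma k * tpow (m - 1) (t - t1 (2 * k + 1)%Z)) ->
  spline m (fun i => t1 (2 * i)%Z) s0 ->
  (forall k, (K < Z.abs k)%Z -> d k = 0) -> (forall i, (L < Z.abs i)%Z -> a i = 0) ->
  (forall t, s0 t + sumZ (- K) K (fun k => d k * psi k t) =
             sumZ (- L) L (fun i => a i * tpow (m - 1) (t - t1 i))) ->
  a (2 * k + 1)%Z = d k * gamma k.
Proof.
  intros Hm Ht1 Hpsi Hs0 Hd Ha Hs.
  set (u := t1 (2 * k)%Z). set (v := t1 (2 * (k + 1))%Z). set (tau := t1 (2 * k + 1)%Z).
  set (T := fun x => tpow (m - 1) (x - tau)).
  assert (Htpow : forall i, i <> (2 * k + 1)%Z -> poly_on m u v (fun x => tpow (m - 1) (x - t1 i))).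
  { intros i Hi. apply poly_on_tpow_outside; [lia|].
    destruct (Z_le_dec i (2 * k)); [left|right]; apply strictly_increasing_le; auto; lia. }
  assert (Hrhs : poly_on m u v (fun x =>
            sumZ (- L) L (fun i => a i * tpow (m - 1) (x - t1 i)) - a (2 * k + 1)%Z * T x)).
  { apply (poly_on_sumZ_extract m u v (- L) L _ _ (2 * k + 1)%Z T).
    - intros Hout. apply Ha. lia.
    - apply (poly_on_ext _ _ _ (fun _ => 0)); [intros; unfold T, tau; ring|apply poly_on_0].
    - intros i Hi. apply (poly_on_ext _ _ _ (fun x => a i * tpow (m - 1) (x - t1 i) + 0 * 0));
        [intros; ring|apply poly_on_lin; [apply Htpow, Hi|apply poly_on_0]]. }
  assert (Hlhs : poly_on m u v (fun x =>
            sumZ (- K) K (fun k => d k * psi k x) - d k * gamma k * T x)).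
  { apply (poly_on_sumZ_extract m u v (- K) K _ _ k T).
    - intros Hout. rewrite Hd by lia. ring.
    - destruct (Hpsi k) as [sigma [Hsigma Hpsik]].
      apply (poly_on_ext _ _ _ (fun x => d k * sigma x + 0 * 0));
        [intros; rewrite Hpsik; unfold T, tau; ring|apply poly_on_lin; [apply Hsigma|apply poly_on_0]].
    - intros k' Hk'. destruct (Hpsi k') as [sigma [Hsigma Hpsik']].
      apply (poly_on_ext _ _ _ (fun x => d k' * sigma x + d k' * gamma k' * tpow (m - 1) (x - t1 (2 * k' + 1)%Z)));
        [intros; rewrite Hpsik'; ring|].
      apply poly_on_lin; [apply Hsigma|apply Htpow; lia]. }
  assert (Hjump : poly_on m u v (fun x => (a (2 * k + 1)%Z - d k * gamma k) * tpow (m - 1) (x - tau))).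
  { apply (poly_on_ext _ _ _ (fun x => 1 * (1 * s0 x + 1 * (sumZ (- K) K (fun k => d k * psi k x)
              - d k * gamma k * T x)) + (-1) * (sumZ (- L) L (fun i => a i * tpow (m - 1) (x - t1 i))
              - a (2 * k + 1)%Z * T x))).
    - intros x _. rewrite <- Hs. unfold T. ring.
    - apply poly_on_lin; [apply poly_on_lin; [apply Hs0|exact Hlhs]|exact Hrhs]. }
  apply poly_on_tpow_coef_0 in Hjump; [lra|lia|].
  split; apply strictly_increasing_lt; auto; lia.
Qed.

Theorem mainTheorem2
  (m mt : nat) (hm : (2 <= m)%nat) (hmt : (1 <= mt)%nat)
  (t1 : Z -> R) (ht1 : strictly_increasing t1)
  (N : Z -> R -> R) (alpha : Z -> R) (psi : Z -> R -> R)
  (hN : forall k, is_Bspline (m + mt) (Xi m mt t1 k) (N k))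
  (halpha : forall k, alpha k <> 0)
  (hpsi : forall k, exists g : R -> R,
     nth_deriv mt (N k) g /\ forall x, psi k x = alpha k * g x) :
  let t0 := fun i : Z => t1 (2 * i)%Z in
  exists gamma : Z -> R,
    (forall k : Z, gamma k <> 0 /\
       exists sigma : R -> R, spline m t0 sigma /\
         forall t, psi k t = sigma t + gamma k * tpow (m - 1) (t - t1 (2 * k + 1)%Z))
    /\
    (forall (s1 s0 : R -> R) (K : Z) (d : Z -> R) (L : Z) (a : Z -> R),
       spline m t1 s1 ->
       (exists A B : R, forall t, t < A \/ B < t -> s1 t = 0) ->
       spline m t0 s0 ->
       (forall k, (K < Z.abs k)%Z -> d k = 0) ->
       (forall t, s1 t = s0 t + sumZ (- K) K (fun k => d k * psi k t)) ->
       (forall i, (L < Z.abs i)%Z -> a i = 0) ->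
       (forall t, s1 t = sumZ (- L) L (fun i => a i * tpow (m - 1) (t - t1 i))) ->
       forall k : Z, d k = a (2 * k + 1)%Z / gamma k).
Proof.
  intros t0.
  destruct (choice (fun k gam => gam <> 0 /\ exists sigma, spline m t0 sigma /\
              forall t, psi k t = sigma t + gam * tpow (m - 1) (t - t1 (2 * k + 1)%Z)))
    as [gamma Hgamma].
  { intros k. exact (wavelet_decomposition m mt t1 (N k) (alpha k) (psi k) k hm hmt ht1
                       (hN k) (halpha k) (hpsi k)). }
  exists gamma. split; [exact Hgamma|].
  (* The spline property and compact support of [s1] only guarantee that its finite
     truncated power expansion exists; the expansion itself is a hypothesis. *)
  intros s1 s0 K d L a _ _ Hs0 Hd Hdec Ha Hrepr k.
  rewrite (wavelet_coefficient m t1 psi gamma s0 K L d a k hm ht1 (fun k => proj2 (Hgamma k))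
             Hs0 Hd Ha (fun t => eq_trans (eq_sym (Hdec t)) (Hrepr t))).
  field. apply Hgamma.
Qed.
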